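(* In the personalized Bayesian linear regression model with DP described in the context, suppose $\mathbf{X}_n^{\intercal}\mathbf{X}_n=\rho\mathbf{I}_d$ for all $n$, with $\rho>0$. Then the DP-perturbed optimal personalized model is $$\tilde{\boldsymbol{\varpi}}_n^{\ast}(\lambda)=\frac{b}{(2-\lambda)\rho+b\lambda}\Big(\Big(\frac{(2-\lambda)\rho}{b}+\frac{\lambda}{N}\Big)\hat{\boldsymbol{u}}_n+\frac{\lambda}{N}\sum_{m\ne n}\hat{\boldsymbol{u}}_m+\frac{\lambda}{N}\sum_{m=1}^N\mathbf{z}_m\Big),$$ and, conditionally on the estimates $\hat{\boldsymbol{u}}_1,\dots,\hat{\boldsymbol{u}}_N$, the optimal local model satisfies $$\boldsymbol{u}_n^{\ast}=\frac{\sigma_w^2\rho}{\sigma^2}\hat{\boldsymbol{u}}_n+\frac{\sigma_w^2\rho}{\sigma^2+N\zeta^2\rho}\sum_{m\ne n}\hat{\boldsymbol{u}}_m+\boldsymbol{\vartheta}_n,$$ where $\boldsymbol{\vartheta}_n\sim\mathcal{N}(0,\sigma_w^2\mathbf{I}_d)$ and $\sigma_w^2=\Big(\frac{N-1}{\sigma^2/\rho+N\zeta^2}+\frac{\rho}{\sigma^2}\Big)^{-1}$.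
   Context: Model: $N$ clients, each with $b$ samples $\mathbf{X}_n\in\mathbb{R}^{b\times d}$, $\mathbf{Y}_n\in\mathbb{R}^b$. The optimal global model $\boldsymbol{\omega}^{\ast}$ has the non-informative (uniform) prior on $\mathbb{R}^d$; $\boldsymbol{u}_n^{\ast}=\boldsymbol{\omega}^{\ast}+\boldsymbol{\tau}_n$ with $\boldsymbol{\tau}_n\sim\mathcal{N}(0,\zeta^2\mathbf{I}_d)$ i.i.d.; $\mathbf{Y}_n=\mathbf{X}_n\boldsymbol{u}_n^{\ast}+\boldsymbol{\nu}_n$ with $\boldsymbol{\nu}_n\sim\mathcal{N}(0,\sigma^2\mathbf{I}_b)$. Local loss $F_n(\boldsymbol{u})=\frac1b\|\mathbf{X}_n\boldsymbol{u}-\mathbf{Y}_n\|^2$; local estimate $\hat{\boldsymbol{u}}_n=(\mathbf{X}_n^{\intercal}\mathbf{X}_n)^{-1}\mathbf{X}_n^{\intercal}\mathbf{Y}_n$. With DP, the server receives $\tilde{\boldsymbol{u}}_n=\hat{\boldsymbol{u}}_n+\mathbf{z}_n$, $\mathbf{z}_n\sim\mathcal{N}(0,\sigma_u^2\mathbf{I}_d)$ i.i.d., and forms $\tilde{\boldsymbol{\omega}}^{\ast}=\sum_{n=1}^N(\mathbf{X}^{\intercal}\mathbf{X})^{-1}\mathbf{X}_n^{\intercal}\mathbf{X}_n\tilde{\boldsymbol{u}}_n$, where $\mathbf{X}=(\mathbf{X}_1^{\top}\cdots\mathbf{X}_N^{\top})^{\top}$. For $\lambda\in[0,2]$, $\tilde{\boldsymbol{\varpi}}_n^{\ast}(\lambda)=\arg\min_{\boldsymbol{\varpi}}\big[(1-\frac{\lambda}{2})F_n(\boldsymbol{\varpi})+\frac{\lambda}{2}\|\boldsymbol{\varpi}-\tilde{\boldsymbol{\omega}}^{\ast}\|^2\big]$.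 *)

From HB Require Import structures.
From mathcomp Require Import all_boot all_order all_algebra.
From mathcomp Require Import all_classical all_reals all_analysis.
Set Implicit Arguments. Unset Strict Implicit. Unset Printing Implicit Defensive.
Import Order.TTheory GRing.Theory Num.Theory.
Local Open Scope ring_scope.

Section Defs.
Variable R : realType.

Definition sqnorm k (v : 'cV[R]_k) : R := \sum_(i < k) (v i ord0) ^+ 2.

Definition gauss k (m : 'cV[R]_k) (s2 : R) (x : 'cV[R]_k) : R :=
  (Num.sqrt (2 * pi * s2)) ^- k * expR (- sqnorm (x - m) / (2 * s2)).

Definition is_unique_argmin (T : Type) (f : T -> R) (x : T) : Prop :=
  (forall y, f x <= f y) /\ (forall y, (forall y', f y <= f y') -> y = x).

(* Lebesgue integral over R^k of a nonnegative function, as k iterated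
   one-dimensional Lebesgue integrals (Tonelli) *)
Definition ncons (x : R) (v : nat -> R) : nat -> R :=
  fun i => if i is i'.+1 then v i' else x.

Fixpoint intRn (k : nat) (f : (nat -> R) -> \bar R) : \bar R :=
  match k with
  | 0 => f (fun _ => 0)
  | k'.+1 => (\int[lebesgue_measure]_(x in setT) intRn k' (fun v => f (ncons x v)))%E
  end.

Definition intV k (F : 'cV[R]_k -> \bar R) : \bar R :=
  intRn k (fun v => F (\col_(i < k) v i)).

(* integrate, over R^d, the coordinates m in s of a family g of vectors *)
Fixpoint intFam N d (s : seq 'I_N) (F : ('I_N -> 'cV[R]_d) -> \bar R)
    (g : 'I_N -> 'cV[R]_d) : \bar R :=
  match s with
  | [::] => F g
  | m :: s' => intV (fun x => intFam s' F (fun j => if j == m then x else g j))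
  end.

Definition uhat b d (Xn : 'M[R]_(b, d)) (Yn : 'cV[R]_b) : 'cV[R]_d :=
  invmx (Xn^T *m Xn) *m Xn^T *m Yn.

Definition Floss b d (Xn : 'M[R]_(b, d)) (Yn : 'cV[R]_b) (u : 'cV[R]_d) : R :=
  b%:R^-1 * sqnorm (Xn *m u - Yn).

Definition Xstack N b d (X : 'I_N -> 'M[R]_(b, d)) :=
  \mxcol_(m < N) (X m : 'M[R]_((fun _ : 'I_N => b) m, d)).

Definition omega_tilde N b d (X : 'I_N -> 'M[R]_(b, d)) (Y : 'I_N -> 'cV[R]_b)
    (z : 'I_N -> 'cV[R]_d) : 'cV[R]_d :=
  \sum_(m < N) (invmx ((Xstack X)^T *m Xstack X) *m ((X m)^T *m X m)
                *m (uhat (X m) (Y m) + z m)).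

Definition pers_obj N b d (X : 'I_N -> 'M[R]_(b, d)) (Y : 'I_N -> 'cV[R]_b)
    (z : 'I_N -> 'cV[R]_d) (n : 'I_N) (lambda : R) (w : 'cV[R]_d) : R :=
  (1 - lambda / 2) * Floss (X n) (Y n) w
  + lambda / 2 * sqnorm (w - omega_tilde X Y z).

(* joint (unnormalised, flat prior on omega) density of
   (omega, u_1..u_N, Y_1..Y_N):  prod_m N(Y_m; X_m u_m, s^2 I_b) N(u_m; omega, zeta^2 I_d) *)
Definition joint_density N b d (X : 'I_N -> 'M[R]_(b, d)) (Y : 'I_N -> 'cV[R]_b)
    (sigma zeta : R) (omega : 'cV[R]_d) (u : 'I_N -> 'cV[R]_d) : R :=
  \prod_(m < N) (gauss (X m *m u m) (sigma ^+ 2) (Y m) * gauss omega (zeta ^+ 2) (u m)).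

(* unnormalised posterior density of u_n given the data: the joint density
   integrated over omega and over all u_m, m <> n, with u_n = u *)
Definition post_unnorm N b d (X : 'I_N -> 'M[R]_(b, d)) (Y : 'I_N -> 'cV[R]_b)
    (sigma zeta : R) (n : 'I_N) (u : 'cV[R]_d) : \bar R :=
  intV (fun omega =>
    intFam [seq m <- enum 'I_N | m != n]
      (fun g => (joint_density X Y sigma zeta omega g)%:E)
      (fun _ => u)).

End Defs.

(* With X_n^T X_n = rho I we have ||X_n u - Y_n||^2 = rho ||u - uhat_n||^2 + const,
   so the local loss and the likelihood of u_n are isotropic quadratics (Gaussian
   kernels) centred at uhat_n, and everything reduces to completing the square:
   a||x - p||^2 + c||x - q||^2 = (a + c)||x - (a p + c q)/(a + c)||^2 + ac/(a + c) ||p - q||^2.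
   For the personalised model, the stacked Gram matrix is N rho I, so the global
   model is the plain average of the uhat_m + z_m and the objective is a single
   isotropic quadratic around the stated point.  For the posterior, integrating
   out each u_m (m <> n) leaves a kernel in omega around uhat_m; their product is
   a kernel around the mean of these uhat_m; multiplying by the prior of u_n and
   integrating out omega leaves a kernel in u_n around that mean, which combines
   with the likelihood of u_n into the Gaussian N(mu, sw2 I). *)

From HB Require Import structures.
From mathcomp Require Import all_boot all_order all_algebra.
From mathcomp Require Import all_classical all_reals all_analysis.
From mathcomp Require Import ring.
Set Implicit Arguments. Unset Strict Implicit. Unset Printing Implicit Defensive.
Import Order.TTheory GRing.Theory Num.Theory.
Local Open Scope ring_scope.

Section SquaredNorm.
Variable R : realType.

Definition dotv k (v w : 'cV[R]_k) : R := \sum_i v i ord0 * w i ord0.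

Lemma sqnormE k (v : 'cV[R]_k) : sqnorm v = dotv v v.
Proof. by apply: eq_bigr => i _; rewrite expr2. Qed.

Lemma sqnorm_ge0 k (v : 'cV[R]_k) : 0 <= sqnorm v.
Proof. by apply: sumr_ge0 => i _; exact: sqr_ge0. Qed.

Lemma sqnorm0 k : sqnorm (0 : 'cV[R]_k) = 0.
Proof. by rewrite /sqnorm big1 // => i _; rewrite mxE expr0n. Qed.

Lemma sqnorm_eq0 k (v : 'cV[R]_k) : (sqnorm v == 0) = (v == 0).
Proof.
apply/idP/eqP => [|->]; last by rewrite sqnorm0.
rewrite psumr_eq0 => [/allP v0|i _]; last exact: sqr_ge0.
apply/matrixP => i j; rewrite ord1 mxE.
by apply/eqP; rewrite -sqrf_eq0; exact: v0 (mem_index_enum _).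
Qed.

Lemma sqnormZ k a (v : 'cV[R]_k) : sqnorm (a *: v) = a ^+ 2 * sqnorm v.
Proof. by rewrite /sqnorm mulr_sumr; apply: eq_bigr => i _; rewrite !mxE; ring. Qed.

Lemma sqnormBC k (v w : 'cV[R]_k) : sqnorm (v - w) = sqnorm (w - v).
Proof. by apply: eq_bigr => i _; rewrite !mxE -sqrrN opprB. Qed.

Lemma sqnormB k (v w : 'cV[R]_k) :
  sqnorm (v - w) = sqnorm v - 2 * dotv v w + sqnorm w.
Proof.
rewrite /sqnorm /dotv mulr_sumr -sumrB -big_split /=.
by apply: eq_bigr => i _; rewrite !mxE; ring.
Qed.

Lemma dotvZr k a (v w : 'cV[R]_k) : dotv v (a *: w) = a * dotv v w.
Proof. by rewrite /dotv mulr_sumr; apply: eq_bigr => i _; rewrite !mxE; ring. Qed.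

Lemma dotv_sumr k (I : finType) (P : pred I) (F : I -> 'cV[R]_k) v :
  dotv v (\sum_(i | P i) F i) = \sum_(i | P i) dotv v (F i).
Proof.
rewrite /dotv; under eq_bigr do rewrite summxE mulr_sumr.
by rewrite exchange_big.
Qed.

Lemma dotv_mulmx m k (A : 'M[R]_(m, k)) u w :
  dotv (A *m u) w = dotv u (A^T *m w).
Proof.
rewrite /dotv; under eq_bigr do rewrite mxE mulr_suml.
rewrite exchange_big /=; apply: eq_bigr => j _.
by rewrite mxE mulr_sumr; apply: eq_bigr => i _; rewrite !mxE; ring.
Qed.

Lemma sqnorm_combine k (a c : R) (x p q : 'cV[R]_k) : a + c != 0 ->
  a * sqnorm (x - p) + c * sqnorm (x - q) =
  (a + c) * sqnorm (x - (a + c)^-1 *: (a *: p + c *: q))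
  + a * c / (a + c) * sqnorm (p - q).
Proof.
move=> ac0; rewrite /sqnorm !mulr_sumr -!big_split /=.
by apply: eq_bigr => i _; rewrite !mxE; field.
Qed.

Lemma sum_sqnorm_sub (I : finType) (P : pred I) k (p : I -> 'cV[R]_k) (w : 'cV[R]_k) :
  let c := #|P|%:R in
  \sum_(i | P i) sqnorm (w - p i) =
  c * sqnorm (w - c^-1 *: \sum_(i | P i) p i)
  + (\sum_(i | P i) sqnorm (p i) - c^-1 * sqnorm (\sum_(i | P i) p i)).
Proof.
move=> c; have [P0|P_neq0] := eqVneq #|P| 0%N.
  have P_empty := card0_eq P0.
  by rewrite /c P0 mul0r add0r !big_pred0 // sqnorm0 mulr0 subrr.
have c0 : c != 0 by rewrite /c pnatr_eq0.
under eq_bigr do rewrite sqnormB.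
rewrite sqnormB sqnormZ dotvZr dotv_sumr !big_split /= sumrN sumr_const -mulr_sumr.
by rewrite -/c; field.
Qed.

End SquaredNorm.

Section GaussianKernel.
Variable R : realType.
Local Notation mu := (@lebesgue_measure R).

Definition gkernel k (a : R) (p x : 'cV[R]_k) : R := expR (- (a * sqnorm (x - p))).

Lemma gkernel_gt0 k a (p x : 'cV[R]_k) : 0 < gkernel a p x.
Proof. exact: expR_gt0. Qed.

Lemma gkernelC k a (p x : 'cV[R]_k) : gkernel a p x = gkernel a x p.
Proof. by rewrite /gkernel sqnormBC. Qed.

Lemma gkernelM k (a c : R) (p q x : 'cV[R]_k) : a + c != 0 ->
  gkernel a p x * gkernel c q x =
  gkernel (a + c) ((a + c)^-1 *: (a *: p + c *: q)) x * gkernel (a * c / (a + c)) q p.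
Proof. by move=> ac0; rewrite /gkernel -!expRD -!opprD sqnorm_combine. Qed.

Lemma prod_gkernel (I : finType) (P : pred I) k a (p : I -> 'cV[R]_k) w :
  let c := #|P|%:R in
  \prod_(i | P i) gkernel a (p i) w =
  gkernel (a * c) (c^-1 *: \sum_(i | P i) p i) w
  * expR (- (a * (\sum_(i | P i) sqnorm (p i) - c^-1 * sqnorm (\sum_(i | P i) p i)))).
Proof.
move=> c; rewrite /gkernel -expRD -expR_sum sumrN; congr expR.
by rewrite -mulr_sumr sum_sqnorm_sub -/c; ring.
Qed.

Lemma gaussE k (m : 'cV[R]_k) s2 x :
  gauss m s2 x = (Num.sqrt (2 * pi * s2)) ^- k * gkernel (2 * s2)^-1 m x.
Proof. by rewrite /gauss /gkernel; congr (_ * expR _); rewrite mulNr mulrC. Qed.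

Lemma gauss_normalizer_gt0 k (s2 : R) : 0 < s2 -> 0 < Num.sqrt (2 * pi * s2) ^- k.
Proof. by move=> s2_gt0; rewrite invr_gt0 exprn_gt0 // sqrtr_gt0 !mulr_gt0 ?pi_gt0. Qed.

Lemma gauss_gt0 k (m : 'cV[R]_k) s2 x : 0 < s2 -> 0 < gauss m s2 x.
Proof. by move=> s2_gt0; rewrite gaussE mulr_gt0 ?gkernel_gt0 ?gauss_normalizer_gt0. Qed.

Lemma integral_expR_sqr (a p c : R) : 0 < a -> 0 <= c ->
  (\int[mu]_(x in setT) (c * expR (- (a * (x - p) ^+ 2)))%:E)%E
  = (c * Num.sqrt (pi / a))%:E.
Proof.
move=> a_gt0 c_ge0.
pose s := Num.sqrt ((2 * a)^-1).
have s_gt0 : 0 < s by rewrite sqrtr_gt0 invr_gt0 mulr_gt0.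
have s2E : s ^+ 2 = (2 * a)^-1 by rewrite sqr_sqrtr // invr_ge0 mulr_ge0 // ltW.
have peakE : normal_peak s = (Num.sqrt (pi / a))^-1.
  rewrite /normal_peak s2E; congr (Num.sqrt _)^-1.
  by rewrite -mulr_natr; field; exact: lt0r_neq0.
have sqrt_neq0 : Num.sqrt (pi / a) != 0 by rewrite gt_eqF // sqrtr_gt0 divr_gt0 // pi_gt0.
have pdfE x : c * expR (- (a * (x - p) ^+ 2))
    = (c * Num.sqrt (pi / a)) * normal_pdf p s x.
  rewrite normal_pdfE ?gt_eqF //= peakE /normal_fun s2E.
  have -> : - (x - p) ^+ 2 / ((2 * a)^-1 *+ 2) = - (a * (x - p) ^+ 2).
    by rewrite -mulr_natr; field; exact: lt0r_neq0.
  by field.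
under eq_integral do rewrite pdfE EFinM.
rewrite integralZl //= ?integral_normal_pdf ?mule1 //.
exact: integrable_normal_pdf.
Qed.

Lemma intRn_expR_sum_sqr k (a : R) (p : nat -> R) c : 0 < a -> 0 <= c ->
  intRn k (fun v => (c * expR (- (a * \sum_(i < k) (v i - p i) ^+ 2)))%:E)
  = (c * Num.sqrt (pi / a) ^+ k)%:E.
Proof.
move=> a_gt0; elim: k p c => [|k IHk] p c c_ge0 /=.
  by rewrite big_ord0 mulr0 oppr0 expR0 expr0.
transitivity (\int[mu]_(x in setT)
   ((c * Num.sqrt (pi / a) ^+ k) * expR (- (a * (x - p 0%N) ^+ 2)))%:E)%E.
  apply: eq_integral => x _.
  rewrite [_ * expR _]mulrC mulrA -(IHk (fun i => p i.+1)) ?mulr_ge0 ?expR_ge0 //.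
  congr intRn; apply/funext => v; congr EFin.
  by rewrite big_ord_recl /= mulrDr opprD expRD; ring.
by rewrite integral_expR_sqr ?mulr_ge0 ?exprn_ge0 ?sqrtr_ge0 // exprS; congr EFin; ring.
Qed.

Lemma intV_gkernel k (a : R) (p : 'cV[R]_k) c : 0 < a -> 0 <= c ->
  intV (fun x => (c * gkernel a p x)%:E) = (c * Num.sqrt (pi / a) ^+ k)%:E.
Proof.
move=> a_gt0 c_ge0; pose pn j := if insub j is Some i then p i ord0 else 0.
rewrite -(intRn_expR_sum_sqr k pn a_gt0 c_ge0) /intV; congr intRn; apply/funext => v.
congr (EFin (c * expR (- (a * _)))); apply: eq_bigr => i _.
by rewrite !mxE /pn valK.
Qed.

Lemma intFam_prod N d (s : seq 'I_N) (phi : 'I_N -> 'cV[R]_d -> R)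
    (J : 'I_N -> R) (g : 'I_N -> 'cV[R]_d) :
  uniq s -> (forall m x, 0 <= phi m x) -> (forall m, 0 <= J m) ->
  (forall m c, m \in s -> 0 <= c -> intV (fun x => (c * phi m x)%:E) = (c * J m)%:E) ->
  intFam s (fun g => (\prod_m phi m (g m))%:E) g
  = ((\prod_(m | m \notin s) phi m (g m)) * \prod_(m <- s) J m)%:E.
Proof.
move=> + phi_ge0 J_ge0; elim: s g => [|m s IHs] g /= uniq_s intJ.
  by rewrite big_nil mulr1.
have /andP[m_notin_s {}uniq_s] := uniq_s.
set c := \prod_(j | j \notin m :: s) phi j (g j) * \prod_(j <- s) J j.
have c_ge0 : 0 <= c.
  by apply: mulr_ge0; apply: prodr_ge0 => j _; [exact: phi_ge0|exact: J_ge0].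
transitivity (intV (fun x => (c * phi m x)%:E)).
  congr intV; apply/funext => x.
  rewrite IHs //; last by move=> m' c' m's; apply: intJ; rewrite in_cons m's orbT.
  congr EFin; rewrite (bigD1 m) //= eqxx.
  rewrite (eq_big (fun j => j \notin m :: s) (fun j => phi j (g j))).
  - by rewrite /c; ring.
  - by move=> j; rewrite in_cons negb_or andbC.
  - by move=> j /andP[_ /negbTE ->].
by rewrite intJ ?mem_head // big_cons /c; congr EFin; ring.
Qed.

End GaussianKernel.

Section IsotropicDesign.
Variables (R : realType) (b d : nat) (X : 'M[R]_(b, d)) (rho : R).
Hypotheses (rho_neq0 : rho != 0) (XtX : X^T *m X = rho%:M).

Lemma trmx_mul_uhat (Y : 'cV[R]_b) : X^T *m Y = rho *: uhat X Y.
Proof. by rewrite /uhat XtX invmx_scalar -mulmxA mul_scalar_mx scalerA mulfV ?scale1r. Qed.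

Lemma sqnorm_design (Y : 'cV[R]_b) u :
  sqnorm (X *m u - Y) = rho * sqnorm (u - uhat X Y) + (sqnorm Y - rho * sqnorm (uhat X Y)).
Proof.
rewrite !sqnormB dotv_mulmx trmx_mul_uhat dotvZr !sqnormE dotv_mulmx mulmxA XtX.
by rewrite mul_scalar_mx dotvZr; ring.
Qed.

Lemma gauss_design (Y : 'cV[R]_b) s2 u :
  gauss (X *m u) s2 Y
  = gauss (X *m uhat X Y) s2 Y * gkernel (rho / (2 * s2)) (uhat X Y) u.
Proof.
rewrite !gaussE /gkernel !(sqnormBC Y) !sqnorm_design subrr sqnorm0.
by rewrite -[RHS]mulrA -expRD; congr (_ * expR _); ring.
Qed.

End IsotropicDesign.

Lemma Xstack_gram (R : realType) N b d (X : 'I_N -> 'M[R]_(b, d)) rho :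
  (forall m, (X m)^T *m X m = rho%:M) -> (Xstack X)^T *m Xstack X = (N%:R * rho)%:M.
Proof.
move=> XtX; rewrite /Xstack tr_mxcol mul_mxrow_mxcol; under eq_bigr do rewrite XtX.
apply/matrixP => i j; rewrite summxE !mxE sumr_const card_ord.
by case: (i == j); rewrite /= ?mulr1n ?mulr0n ?mul0rn // mulr_natl.
Qed.

Lemma omega_tilde_isotropic (R : realType) N b d (X : 'I_N -> 'M[R]_(b, d)) rho Y z :
  (0 < N)%N -> rho != 0 -> (forall m, (X m)^T *m X m = rho%:M) ->
  omega_tilde X Y z = N%:R^-1 *: \sum_m (uhat (X m) (Y m) + z m).
Proof.
move=> N_gt0 rho_neq0 XtX; rewrite /omega_tilde (Xstack_gram XtX) invmx_scalar scaler_sumr.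
apply: eq_bigr => m _; rewrite XtX -mulmxA !mul_scalar_mx scalerA.
by congr (_ *: _); field; rewrite rho_neq0 pnatr_eq0 -lt0n N_gt0.
Qed.

Lemma is_unique_argmin_sqnorm (R : realType) k (f : 'cV[R]_k -> R) a r K :
  0 < a -> (forall w, f w = a * sqnorm (w - r) + K) -> is_unique_argmin f r.
Proof.
move=> a_gt0 fE; have fr : f r = K by rewrite fE subrr sqnorm0 mulr0 add0r.
split=> [y|y /(_ r)]; rewrite fr fE; first by rewrite lerDr mulr_ge0 ?sqnorm_ge0 ?ltW.
rewrite gerDr pmulr_rle0 // => sqnorm_le0.
by apply/eqP; rewrite -subr_eq0 -sqnorm_eq0 eq_le sqnorm_le0 sqnorm_ge0.
Qed.

Lemma is_unique_argmin_dim0 (R : realType) d (f : 'cV[R]_d -> R) x :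
  d = 0%N -> is_unique_argmin f x.
Proof.
move=> d0; have cV_eq (v w : 'cV[R]_d) : v = w.
  by apply/matrixP => -[i i_lt]; exfalso; rewrite d0 in i_lt.
by split=> [y|y _]; rewrite (cV_eq y x).
Qed.

Lemma design_rows_gt0 (R : realType) b d (X : 'M[R]_(b, d)) rho :
  0 < rho -> X^T *m X = rho%:M -> (0 < d)%N -> (0 < b)%N.
Proof.
move=> rho_gt0 /matrixP XtX d_gt0; have := XtX (Ordinal d_gt0) (Ordinal d_gt0).
rewrite !mxE eqxx mulr1n; case: b X {XtX} => // X; rewrite big_ord0 => rho0.
by move: rho_gt0; rewrite -rho0 ltxx.
Qed.

Section PersonalizedModel.
Variables (R : realType) (N b d : nat) (n : 'I_N) (X : 'I_N -> 'M[R]_(b, d)).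
Variables (rho lambda : R) (Y : 'I_N -> 'cV[R]_b) (z : 'I_N -> 'cV[R]_d).
Hypotheses (rho_gt0 : 0 < rho) (lambda_ge0 : 0 <= lambda) (lambda_le2 : lambda <= 2).
Hypothesis XtX : forall m, (X m)^T *m X m = rho%:M.

Let uh := uhat (X n) (Y n).
Let loss_weight := (1 - lambda / 2) * (rho / b%:R).

Lemma pers_objE w : pers_obj X Y z n lambda w =
  loss_weight * sqnorm (w - uh) + lambda / 2 * sqnorm (w - omega_tilde X Y z)
  + (1 - lambda / 2) / b%:R * (sqnorm (Y n) - rho * sqnorm uh).
Proof.
by rewrite /pers_obj /Floss (sqnorm_design (lt0r_neq0 rho_gt0) (XtX n)) /loss_weight; ring.
Qed.

Lemma pers_obj_argmin :
  is_unique_argmin (pers_obj X Y z n lambda)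
    ((b%:R / ((2 - lambda) * rho + b%:R * lambda)) *:
       (((2 - lambda) * rho / b%:R + lambda / N%:R) *: uhat (X n) (Y n)
        + (lambda / N%:R) *: (\sum_(m < N | m != n) uhat (X m) (Y m))
        + (lambda / N%:R) *: (\sum_(m < N) z m))).
Proof.
(* For [d = 0] the design may have [b = 0] rows, where [Floss] divides by zero. *)
have [d0|d_gt0] := posnP d; first exact: is_unique_argmin_dim0.
have b_gt0 : (0 < b%:R :> R) by rewrite ltr0n (design_rows_gt0 rho_gt0 (XtX n)).
have N_gt0 : (0 < N)%N by case: N n => [[]|].
have denom_gt0 : 0 < (2 - lambda) * rho + b%:R * lambda.
  have [->|lambda_neq0] := eqVneq lambda 0; first by rewrite subr0 mulr0 addr0; apply: mulr_gt0.
  have lambda_gt0 : 0 < lambda by rewrite lt0r lambda_neq0.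
  apply: ltr_wpDl; last exact: mulr_gt0.
  by apply: mulr_ge0; [rewrite subr_ge0 | exact: ltW].
have weight_gt0 : 0 < loss_weight + lambda / 2.
  have -> : loss_weight + lambda / 2 = ((2 - lambda) * rho + b%:R * lambda) / (2 * b%:R).
    by rewrite /loss_weight; field; rewrite gt_eqF.
  by rewrite divr_gt0 ?mulr_gt0.
apply: (is_unique_argmin_sqnorm weight_gt0) => w.
rewrite pers_objE (sqnorm_combine _ _ _ (lt0r_neq0 weight_gt0)) -!addrA.
congr (_ * sqnorm (w - _) + _).
rewrite (omega_tilde_isotropic _ _ N_gt0 (lt0r_neq0 rho_gt0) XtX) big_split /=.
rewrite (bigD1 n) //= -/uh; apply/matrixP => i j; rewrite !mxE /loss_weight.
have N_neq0 : N%:R != 0 :> R by rewrite pnatr_eq0 -lt0n.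
field; rewrite N_neq0 (lt0r_neq0 b_gt0) (_ : 1 + (1 - lambda) = 2 - lambda) //; last by ring.
by rewrite lt0r_neq0.
Qed.

End PersonalizedModel.

Section Posterior.
Variables (R : realType) (N b d : nat) (n : 'I_N) (X : 'I_N -> 'M[R]_(b, d)).
Variables (rho sigma zeta : R) (Y : 'I_N -> 'cV[R]_b).
Hypotheses (rho_gt0 : 0 < rho) (sigma_gt0 : 0 < sigma) (zeta_gt0 : 0 < zeta).
Hypothesis XtX : forall m, (X m)^T *m X m = rho%:M.

Let uh m := uhat (X m) (Y m).
Let lik m x := gauss (X m *m x) (sigma ^+ 2) (Y m).
Let S := \sum_(m < N | m != n) uh m.
Let M : R := N%:R - 1.

(* Precisions: [alpha] of the likelihood of u_m around uhat_m, [beta] of the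
   prior of u_m around omega, [gamma] of uhat_m around omega once u_m is
   integrated out, and [delta = M * eps] of u_n around the mean of the other
   uhat_m once omega is integrated out. *)
Let alpha := rho / (2 * sigma ^+ 2).
Let beta := (2 * zeta ^+ 2)^-1.
Let gamma := rho / (2 * (sigma ^+ 2 + zeta ^+ 2 * rho)).
Let eps := rho / (2 * (sigma ^+ 2 + N%:R * zeta ^+ 2 * rho)).
Let delta := M * eps.

Let N_gt0 : (0 < N)%N. Proof. by case: N n => [[]|]. Qed.
Let M_ge0 : 0 <= M. Proof. by rewrite /M subr_ge0 ler1n. Qed.
Let s2_gt0 : 0 < sigma ^+ 2. Proof. exact: exprn_gt0. Qed.
Let z2_gt0 : 0 < zeta ^+ 2. Proof. exact: exprn_gt0. Qed.
Let s2_z2_gt0 : 0 < sigma ^+ 2 + zeta ^+ 2 * rho.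
Proof. by rewrite addr_gt0 // mulr_gt0. Qed.
Let s2_Nz2_gt0 : 0 < sigma ^+ 2 + N%:R * zeta ^+ 2 * rho.
Proof. by rewrite ltr_wpDr // !mulr_ge0 ?ler0n ?ltW. Qed.
Let alpha_gt0 : 0 < alpha. Proof. by rewrite /alpha divr_gt0 ?mulr_gt0. Qed.
Let beta_gt0 : 0 < beta. Proof. by rewrite /beta invr_gt0 mulr_gt0. Qed.
Let gamma_gt0 : 0 < gamma. Proof. by rewrite /gamma divr_gt0 ?mulr_gt0. Qed.
Let eps_gt0 : 0 < eps. Proof. by rewrite /eps divr_gt0 ?mulr_gt0. Qed.
Let delta_ge0 : 0 <= delta. Proof. exact: mulr_ge0 M_ge0 (ltW eps_gt0). Qed.
Let beta_gammaM_gt0 : 0 < beta + gamma * M.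
Proof. exact: ltr_wpDr (mulr_ge0 (ltW gamma_gt0) M_ge0) beta_gt0. Qed.
Let alpha_delta_gt0 : 0 < alpha + delta. Proof. exact: ltr_wpDr delta_ge0 alpha_gt0. Qed.
Let lik_gt0 m x : 0 < lik m x. Proof. exact: gauss_gt0. Qed.

Lemma gammaE : alpha * beta / (alpha + beta) = gamma.
Proof. by rewrite /alpha /beta /gamma; field; rewrite !gt_eqF. Qed.

Lemma deltaE : beta * (gamma * M) / (beta + gamma * M) = delta.
Proof. by rewrite /beta /gamma /delta /eps /M; field; rewrite !gt_eqF. Qed.

Lemma alpha_deltaE :
  alpha + delta = (2 * ((N%:R - 1) / (sigma ^+ 2 / rho + N%:R * zeta ^+ 2)
                        + rho / sigma ^+ 2)^-1)^-1.
Proof.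
have den_gt0 :
    0 < (N%:R - 1) * rho * sigma ^+ 2 + rho * (sigma ^+ 2 + N%:R * zeta ^+ 2 * rho).
  apply: ltr_wpDl; last exact: mulr_gt0.
  exact: mulr_ge0 (mulr_ge0 M_ge0 (ltW rho_gt0)) (ltW s2_gt0).
by rewrite /alpha /delta /eps /M; field; rewrite !gt_eqF.
Qed.

Lemma likE m x : lik m x = lik m (uh m) * gkernel alpha (uh m) x.
Proof. exact: gauss_design (lt0r_neq0 rho_gt0) (XtX m) _ _ _. Qed.

Let cz := Num.sqrt (2 * pi * zeta ^+ 2) ^- d.
Let cz_gt0 : 0 < cz. Proof. exact: gauss_normalizer_gt0. Qed.

Lemma priorE (w x : 'cV[R]_d) : gauss w (zeta ^+ 2) x = cz * gkernel beta w x.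
Proof. exact: gaussE. Qed.

Let Jc m := lik m (uh m) * cz * Num.sqrt (pi / (alpha + beta)) ^+ d.

Let Jc_gt0 m : 0 < Jc m.
Proof.
rewrite /Jc; apply: mulr_gt0; last by rewrite exprn_gt0 // sqrtr_gt0 divr_gt0 ?pi_gt0 ?addr_gt0.
exact: mulr_gt0 (lik_gt0 _ _) cz_gt0.
Qed.

Lemma intV_lik_prior m w c : 0 <= c ->
  intV (fun x => (c * (lik m x * gauss w (zeta ^+ 2) x))%:E)
  = (c * (Jc m * gkernel gamma (uh m) w))%:E.
Proof.
move=> c_ge0; have ab_neq0 := lt0r_neq0 (addr_gt0 alpha_gt0 beta_gt0).
transitivity (intV (fun x =>
    (c * lik m (uh m) * cz * gkernel gamma (uh m) w
     * gkernel (alpha + beta) ((alpha + beta)^-1 *: (alpha *: uh m + beta *: w)) x)%:E)).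
  congr intV; apply/funext => x; congr EFin.
  have combineE := gkernelM (uh m) w x ab_neq0.
  rewrite gammaE [gkernel gamma _ _]gkernelC in combineE.
  rewrite likE priorE.
  transitivity (c * lik m (uh m) * cz * (gkernel alpha (uh m) x * gkernel beta w x)).
    by ring.
  by rewrite combineE; ring.
rewrite intV_gkernel ?addr_gt0 //; first by congr EFin; rewrite /Jc; ring.
apply: mulr_ge0; last exact/ltW/gkernel_gt0.
exact: mulr_ge0 (mulr_ge0 c_ge0 (ltW (lik_gt0 _ _))) (ltW cz_gt0).
Qed.

Lemma post_unnorm_intV u : post_unnorm X Y sigma zeta n u =
  intV (fun w => (lik n u * gauss w (zeta ^+ 2) u
                  * \prod_(m | m != n) (Jc m * gkernel gamma (uh m) w))%:E).
Proof.
congr intV; apply/funext => w.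
rewrite (@intFam_prod _ _ _ _ (fun m x => lik m x * gauss w (zeta ^+ 2) x)
                      (fun m => Jc m * gkernel gamma (uh m) w)).
- congr (_ * _)%:E.
  + rewrite (eq_bigl (pred1 n)) ?big_pred1_eq // => j /=.
    by rewrite mem_filter mem_enum andbT negbK.
  + by rewrite big_filter big_enum_cond.
- by rewrite filter_uniq // enum_uniq.
- by move=> m x; rewrite ltW // mulr_gt0 ?gauss_gt0.
- by move=> m; apply/ltW/mulr_gt0/gkernel_gt0.
- by move=> m c _; exact: intV_lik_prior.
Qed.

Let q := M^-1 *: S.
Let Q := \sum_(m | m != n) sqnorm (uh m) - M^-1 * sqnorm S.
Let PJ := \prod_(m | m != n) Jc m.

Lemma card_others : #|(fun m : 'I_N => m != n)|%:R = M.
Proof.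
by rewrite (@eq_card _ _ (predC1 n)) // cardC1 card_ord /M -{2}(prednK N_gt0) -natr1 addrK.
Qed.

Lemma prod_others w : \prod_(m | m != n) (Jc m * gkernel gamma (uh m) w)
                      = PJ * expR (- (gamma * Q)) * gkernel (gamma * M) q w.
Proof. by rewrite big_split /= prod_gkernel card_others -/S -/q -/Q /PJ; ring. Qed.

(* When [N = 1] both sides vanish: [M = 0] and [S] is an empty sum. *)
Lemma delta_q : delta *: q = eps *: S.
Proof.
have [M0|M_neq0] := eqVneq M 0; last by rewrite /q scalerA /delta mulrAC mulfV ?mul1r.
suff S0 : S = 0 by rewrite /q S0 !scaler0.
move/eqP: M0; rewrite -card_others pnatr_eq0 => /eqP/card0_eq S_empty.
by rewrite /S big_pred0.
Qed.

Lemma post_unnorm_omega u : post_unnorm X Y sigma zeta n u =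
  intV (fun w => ((lik n u * cz * PJ * expR (- (gamma * Q)) * gkernel delta q u)
                  * gkernel (beta + gamma * M)
                      ((beta + gamma * M)^-1 *: (beta *: u + (gamma * M) *: q)) w)%:E).
Proof.
rewrite post_unnorm_intV; congr intV; apply/funext => w; congr EFin.
have combineE := gkernelM u q w (lt0r_neq0 beta_gammaM_gt0).
rewrite deltaE in combineE.
rewrite prod_others priorE gkernelC.
transitivity (lik n u * cz * PJ * expR (- (gamma * Q))
              * (gkernel beta u w * gkernel (gamma * M) q w)); first by ring.
by rewrite combineE; ring.
Qed.

Lemma post_unnorm_kernel : exists2 K, 0 < K & forall u,
  post_unnorm X Y sigma zeta n u
  = (K * gkernel (alpha + delta) ((alpha + delta)^-1 *: (alpha *: uh n + eps *: S)) u)%:E.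
Proof.
have PJ_gt0 : 0 < PJ by apply: prodr_gt0 => m _; exact: Jc_gt0.
have sqrt_gt0 : 0 < Num.sqrt (pi / (beta + gamma * M)) ^+ d.
  by rewrite exprn_gt0 // sqrtr_gt0 divr_gt0 ?pi_gt0.
have factor_gt0 u : 0 < lik n u * cz * PJ * expR (- (gamma * Q)).
  exact: mulr_gt0 (mulr_gt0 (mulr_gt0 (lik_gt0 _ _) cz_gt0) PJ_gt0) (expR_gt0 _).
exists (lik n (uh n) * cz * PJ * expR (- (gamma * Q))
        * Num.sqrt (pi / (beta + gamma * M)) ^+ d
        * gkernel (alpha * delta / (alpha + delta)) q (uh n)).
  exact: mulr_gt0 (mulr_gt0 (factor_gt0 _) sqrt_gt0) (gkernel_gt0 _ _ _).
move=> u; rewrite post_unnorm_omega intV_gkernel //; last first.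
  exact/ltW/mulr_gt0/gkernel_gt0.
have combineE := gkernelM (uh n) q u (lt0r_neq0 alpha_delta_gt0).
rewrite delta_q in combineE.
congr EFin; rewrite likE.
transitivity (lik n (uh n) * cz * PJ * expR (- (gamma * Q))
              * Num.sqrt (pi / (beta + gamma * M)) ^+ d
              * (gkernel alpha (uh n) u * gkernel delta q u)); first by ring.
by rewrite combineE; ring.
Qed.

Lemma post_unnorm_gauss :
  let sw2 := ((N%:R - 1) / (sigma ^+ 2 / rho + N%:R * zeta ^+ 2) + rho / sigma ^+ 2)^-1 in
  exists C : R, 0 < C /\
    forall u : 'cV[R]_d,
      post_unnorm X Y sigma zeta n u =
      (C * gauss ((sw2 * rho / sigma ^+ 2) *: uhat (X n) (Y n)
                  + (sw2 * rho / (sigma ^+ 2 + N%:R * zeta ^+ 2 * rho)) *: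
                      (\sum_(m < N | m != n) uhat (X m) (Y m)))
                 sw2 u)%:E.
Proof.
move=> sw2; have [K K_gt0 postE] := post_unnorm_kernel.
have precE : (2 * sw2)^-1 = alpha + delta by rewrite alpha_deltaE.
have sw2_gt0 : 0 < sw2.
  by move: alpha_delta_gt0; rewrite -precE invr_gt0 pmulr_rgt0.
have meanE : (alpha + delta)^-1 *: (alpha *: uh n + eps *: S)
    = (sw2 * rho / sigma ^+ 2) *: uh n
      + (sw2 * rho / (sigma ^+ 2 + N%:R * zeta ^+ 2 * rho)) *: S.
  rewrite -precE invrK scalerDr !scalerA /alpha /eps.
  by congr (_ *: _ + _ *: _); field; rewrite !gt_eqF.
exists (K / Num.sqrt (2 * pi * sw2) ^- d); split.
  by rewrite divr_gt0 ?gauss_normalizer_gt0.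
move=> u; rewrite postE gaussE precE -meanE; congr EFin.
by field; rewrite gt_eqF // exprn_gt0 // sqrtr_gt0 !mulr_gt0 ?pi_gt0.
Qed.

End Posterior.

Theorem lemma3 (R : realType) (N b d : nat) (n : 'I_N)
    (X : 'I_N -> 'M[R]_(b, d)) (rho sigma zeta lambda : R) :
  0 < rho -> 0 < sigma -> 0 < zeta -> 0 <= lambda <= 2 ->
  (forall m, (X m)^T *m X m = rho%:M) ->
  (* (1) closed form of the DP-perturbed optimal personalised model *)
  (forall (Y : 'I_N -> 'cV[R]_b) (z : 'I_N -> 'cV[R]_d),
     is_unique_argmin (pers_obj X Y z n lambda)
       ((b%:R / ((2 - lambda) * rho + b%:R * lambda)) *:
          (((2 - lambda) * rho / b%:R + lambda / N%:R) *: uhat (X n) (Y n)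
           + (lambda / N%:R) *: (\sum_(m < N | m != n) uhat (X m) (Y m))
           + (lambda / N%:R) *: (\sum_(m < N) z m)))) /\
  (* (2) posterior of the optimal local model u_n^* given the data *)
  (let sw2 := ((N%:R - 1) / (sigma ^+ 2 / rho + N%:R * zeta ^+ 2)
               + rho / sigma ^+ 2)^-1 in
   forall Y : 'I_N -> 'cV[R]_b,
     exists C : R, 0 < C /\
       forall u : 'cV[R]_d,
         post_unnorm X Y sigma zeta n u =
         (C * gauss ((sw2 * rho / sigma ^+ 2) *: uhat (X n) (Y n)
                     + (sw2 * rho / (sigma ^+ 2 + N%:R * zeta ^+ 2 * rho)) *:
                         (\sum_(m < N | m != n) uhat (X m) (Y m)))
                    sw2 u)%:E).
Proof.
move=> rho_gt0 sigma_gt0 zeta_gt0 /andP[lambda_ge0 lambda_le2] XtX; split.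
  by move=> Y z; exact: pers_obj_argmin.
by move=> sw2 Y; exact: post_unnorm_gauss.
Qed.
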